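(* Let $f\in\mathbb{Q}[x]$ have degree $n$ and $g\in\mathbb{Q}[x]$ have degree $\le 2n-2$. Let $Q^*\in S^n(\mathbb{R})$ be positive definite with smallest eigenvalue $\sigma>0$, let $q^*\in\mathbb{R}[x]$ have degree $\le n-2$, and suppose $\rho:=\|\mathbf{x}^TQ^*\mathbf{x}+q^*f-g\|<\sigma$. Let $$0<\delta<\frac{\sigma-\rho}{n+(n-1)\sqrt n\,\|f\|}.$$ Then for every $\overline Q\in S^n(\mathbb{Q})$ and every $q\in\mathbb{Q}[x]$ of degree $\le n-2$ with $|\overline Q_{i,j}-Q^*_{i,j}|\le\delta$ for all $1\le i,j\le n$ and $|q_i-q^*_i|\le\delta$ for all $0\le i\le n-2$ (coefficients of $x^i$), the matrix $Q:=\pi_{g-qf}(\overline Q)\in S^n(\mathbb{Q})$ satisfies $g=\mathbf{x}^TQ\,\mathbf{x}+q\,f$ and is positive definite.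
   Context: $S^n(\mathbb{R})$ (resp. $S^n(\mathbb{Q})$) denotes real (resp. rational) symmetric $n\times n$ matrices; $\mathbf{x}=[1,x,\dots,x^{n-1}]^T$; $\|\cdot\|$ denotes the $2$-norm of the coefficient vector of a polynomial and the Frobenius norm of a matrix. For $p=\sum_{k=0}^{2n-2}p_kx^k$, $Q_p$ is the symmetric Hankel matrix with $(Q_p)_{i,j}=p_{i+j-2}/s_{i+j-2}$, where $s_k=k+1$ for $0\le k\le n-1$ and $s_k=2n-1-k$ for $n-1\le k\le 2n-2$; and $\pi_p(Q)=Q-Q_{\mathbf{x}^TQ\mathbf{x}-p}$ for $Q\in S^n(\mathbb{R})$. *)

From HB Require Import structures.
From mathcomp Require Import all_boot all_order all_algebra.
From mathcomp Require Import reals.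
Set Implicit Arguments. Unset Strict Implicit. Unset Printing Implicit Defensive.
Import Order.TTheory GRing.Theory Num.Theory.
Local Open Scope ring_scope.

(* x^T Q x with x = [1, x, ..., x^(n-1)]^T (0-based indices: x_i = x^i). *)
Definition xQx (F : comRingType) (n : nat) (Q : 'M[F]_n) : {poly F} :=
  \sum_(i < n) \sum_(j < n) Q i j *: 'X^(i + j).

Definition polynorm (R : rcfType) (p : {poly R}) : R :=
  Num.sqrt (\sum_(i < size p) p`_i ^+ 2).

Definition sk (n k : nat) : nat := if (k < n)%N then k.+1 else (n.*2.-1 - k)%N.

Definition Qmat (F : fieldType) (n : nat) (p : {poly F}) : 'M[F]_n :=
  \matrix_(i < n, j < n) (p`_(i + j) / (sk n (i + j))%:R).

Definition proj_pi (F : fieldType) (n : nat) (p : {poly F}) (Q : 'M[F]_n) : 'M[F]_n :=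
  Q - Qmat n (xQx Q - p).

Definition posdef (R : numDomainType) (n : nat) (A : 'M[R]_n) : Prop :=
  forall v : 'cV[R]_n, v != 0 -> 0 < (v^T *m A *m v) 0 0.

Definition smallest_eigenvalue (R : realFieldType) (n : nat) (A : 'M[R]_n) (s : R) : Prop :=
  eigenvalue A s /\ forall a : R, eigenvalue A a -> s <= a.

From HB Require Import structures.
From mathcomp Require Import all_boot all_order all_algebra.
From mathcomp Require Import reals.
From mathcomp Require Import complex.
From mathcomp Require Import zify ring lra.
Set Implicit Arguments. Unset Strict Implicit. Unset Printing Implicit Defensive.
Import Order.TTheory GRing.Theory Num.Theory.
Local Open Scope ring_scope.

(* Write [Qb = Q* + D] and [h = q - q*].  Since [x^T Q_p x = p] whenever
   [deg p <= 2n-2] (the [k]-th antidiagonal has [s_k] entries), [pi_(g-qf) Qb]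
   represents [g - q f] exactly, and
     [pi_(g-qf) Qb = Q* + (D - Q_(x^T D x)) - Q_r - Q_(h f)]  with
     [r = x^T Q* x + q* f - g].
   The form [v^T Q* v] is at least [sigma |v|^2], while every correction [E]
   satisfies [|v^T E v| <= ||E||_F |v|^2], where
   [||D - Q_(x^T D x)||_F <= ||D||_F <= n delta] ([Q_(x^T D x)] is the orthogonal
   projection of [D] onto Hankel matrices), [||Q_r||_F <= ||r|| = rho] and
   [||Q_(h f)||_F <= (n-1) delta ||f||].  The bound on [delta] keeps the sum of
   these below [sigma]. *)

Section SpectralBound.
Local Open Scope sesquilinear_scope.

Lemma normal_spectral_diag_eigenvalue (C : numClosedFieldType) n (A : 'M[C]_n) k :
  A \is normalmx -> eigenvalue A (spectral_diag A 0 k).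
Proof.
move=> A_normal.
have AE : A = invmx (spectralmx A) *m diag_mx (spectral_diag A) *m spectralmx A.
  exact/orthomx_spectralP.
apply/eigenvalueP; exists (delta_mx 0 k *m spectralmx A).
  rewrite {2}AE !mulmxA mulmxK ?spectral_unit // scalemxAl mul_mx_diag.
  congr (_ *m _); apply/rowP => j; rewrite !mxE eqxx /=.
  by case: (eqVneq j k) => [->|_]; rewrite ?mulr1n ?mulr0n ?mulr1 ?mulr0 ?mul1r ?mul0r.
rewrite mulmx_free_eq0; last by rewrite row_free_unit spectral_unit.
by apply/eqP => /rowP/(_ k)/eqP; rewrite !mxE !eqxx oner_eq0.
Qed.

Lemma normal_qform_ge (C : numClosedFieldType) n (A : 'M[C]_n) (s : C) :
  A \is normalmx -> (forall k, s <= spectral_diag A 0 k) ->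
  forall w : 'cV[C]_n, s * (w ^t Num.conj *m w) 0 0 <= (w ^t Num.conj *m A *m w) 0 0.
Proof.
move=> A_normal Hs w.
set P := spectralmx A; set d := spectral_diag A in Hs *.
have PtP : P ^t Num.conj *m P = 1%:M.
  by rewrite -invmx_unitary ?spectral_unitarymx // mulVmx ?spectral_unit.
have AE : A = invmx P *m diag_mx d *m P by apply/orthomx_spectralP.
set y := P *m w.
have yt : y ^t Num.conj = w ^t Num.conj *m P ^t Num.conj by rewrite trmx_mul map_mxM.
have -> : w ^t Num.conj *m w = y ^t Num.conj *m y.
  by rewrite yt -mulmxA (mulmxA _ P) PtP mul1mx.
have -> : w ^t Num.conj *m A *m w = y ^t Num.conj *m diag_mx d *m y.
  by rewrite AE invmx_unitary ?spectral_unitarymx // yt /y !mulmxA.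
rewrite !mxE mulr_sumr; apply: ler_sum => k _.
rewrite mul_mx_diag !mxE mulrAC [_ * d 0 k]mulrC ler_wpM2r //.
by rewrite mulrC -normCK exprn_ge0.
Qed.

(* A real symmetric matrix is Hermitian over [R[i]], so the complex spectral
   theorem applies; its spectral values are real eigenvalues of [A]. *)
Lemma symmetric_qform_ge (R : rcfType) n (A : 'M[R]_n) (s : R) : A^T = A ->
  (forall a, eigenvalue A a -> s <= a) ->
  forall v : 'cV[R]_n, s * (v^T *m v) 0 0 <= (v^T *m A *m v) 0 0.
Proof.
move=> A_sym A_eig v.
pose f := real_complex R; pose AC := map_mx f A.
have AC_real : AC \is a realmx.
  by apply/mxOverP => i j; rewrite mxE; apply/complex_realP; exists (A i j).
have AC_sym : AC \is symmetricmx.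
  by apply/is_hermitianmxP; rewrite expr0 scale1r map_mx_id // /AC map_trmx A_sym.
have AC_herm := realsym_hermsym AC_sym AC_real.
have AC_normal := hermitian_normalmx AC_herm.
have vt : (map_mx f v) ^t Num.conj = (map_mx f v)^T.
  apply/matrixP => i j; rewrite !mxE; apply: conj_Creal.
  by apply/complex_realP; exists (v j i).
have := normal_qform_ge (s := f s) AC_normal _ (map_mx f v).
rewrite vt map_trmx -!map_mxM !mxE -rmorphM lecR; apply => k.
have /complex_realP [r dk] : spectral_diag AC 0 k \is Num.real.
  exact: mxOverP (hermitian_spectral_diag_real AC_herm) _ _.
rewrite dk lecR; apply: A_eig.
have := normal_spectral_diag_eigenvalue k AC_normal.
by rewrite dk !eigenvalue_root_char /AC -map_char_poly fmorph_root.
Qed.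
End SpectralBound.

Lemma sum_ord_ltn n m : (\sum_(i < n) (i < m : nat) = minn n m)%N.
Proof.
elim: n => [|n IH]; first by rewrite big_ord0 min0n.
by rewrite big_ord_recr /= IH; case: (ltnP n m) => /=; lia.
Qed.

Lemma sum_ord_addn_eq n i k :
  (\sum_(j < n) (i + j == k : nat) = (i <= k < i + n))%N.
Proof.
case: (boolP (i <= k < i + n)%N) => [/andP[le_ik lt_k_in]|out].
  have lt_ki_n : (k - i < n)%N by lia.
  rewrite (bigD1 (Ordinal lt_ki_n)) //= subnKC // eqxx big1 // => j /eqP ne_j.
  by case: eqP => // eq_ij; case: ne_j; apply: val_inj => /=; lia.
rewrite big1 // => j _; case: eqP => // eq_ij.
by move: out; rewrite -eq_ij leq_addr ltn_add2l ltn_ord.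
Qed.

Lemma card_antidiagonal n k : (\sum_(i < n) \sum_(j < n) (i + j == k : nat) =
  if k < n.*2.-1 then sk n k else 0)%N.
Proof.
under eq_bigr => i _ do rewrite sum_ord_addn_eq.
have split_ltn (i : 'I_n) : (i < k.+1 : nat) = ((i <= k < i + n) : nat) + (i < k.+1 - n)%N.
  by case: (leqP i k); case: (ltnP k (i + n)) => /=; lia.
have := sum_ord_ltn n k.+1.
rewrite (eq_bigr _ (fun i _ => split_ltn i)) big_split /= sum_ord_ltn /sk.
by case: (ltnP k n); case: (ltnP k n.*2.-1); lia.
Qed.

Lemma sk_gt0 n k : (k < n.*2.-1)%N -> (0 < sk n k)%N.
Proof. by rewrite /sk; case: ifP => //; lia. Qed.

Lemma coef_xQx (F : comNzRingType) n (Q : 'M[F]_n) k :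
  (xQx Q)`_k = \sum_(i < n) \sum_(j < n) Q i j * ((i + j)%N == k)%:R.
Proof.
rewrite /xQx coef_sum; apply: eq_bigr => i _; rewrite coef_sum.
by apply: eq_bigr => j _; rewrite coefZ coefXn eq_sym.
Qed.

Lemma coef_xQx_const1 (F : comNzRingType) n k :
  (xQx (const_mx 1 : 'M[F]_n))`_k = (if k < n.*2.-1 then sk n k else 0)%N%:R.
Proof.
rewrite coef_xQx -card_antidiagonal natr_sum; apply: eq_bigr => i _.
by rewrite natr_sum; apply: eq_bigr => j _; rewrite mxE mul1r.
Qed.

Lemma size_xQx (F : comNzRingType) n (A : 'M[F]_n) : (size (xQx A) <= n.*2.-1)%N.
Proof.
apply/leq_sizeP => k hk; rewrite coef_xQx big1 // => i _; rewrite big1 // => j _.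
suff /negbTE -> : (i + j != k)%N by rewrite mulr0.
by have := ltn_ord i; have := ltn_ord j; lia.
Qed.

Lemma sum_antidiagonal (F : comNzRingType) n (M : 'M[F]_n) (phi : nat -> F) :
  \sum_(i < n) \sum_(j < n) M i j * phi (i + j)%N =
  \sum_(k < n.*2.-1) phi k * (xQx M)`_k.
Proof.
under [RHS]eq_bigr => k _ do rewrite coef_xQx mulr_sumr.
rewrite [RHS]exchange_big; apply: eq_bigr => i _.
under [RHS]eq_bigr => k _ do rewrite mulr_sumr.
rewrite [RHS]exchange_big; apply: eq_bigr => j _.
have lt_ij : (i + j < n.*2.-1)%N by have := ltn_ord i; have := ltn_ord j; lia.
rewrite (bigD1 (Ordinal lt_ij)) //= eqxx mulr1 mulrC big1 ?addr0 // => k ne_k.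
suff /negbTE -> : (i + j != k)%N by rewrite !mulr0.
by apply: contra ne_k => /eqP eq_k; apply/eqP/val_inj.
Qed.

Lemma xQx_Qmat (F : numFieldType) n (p : {poly F}) : (size p <= n.*2.-1)%N ->
  xQx (Qmat n p) = p.
Proof.
move=> size_p; apply/polyP => k; rewrite coef_xQx.
have -> : \sum_(i < n) \sum_(j < n) Qmat n p i j * ((i + j)%N == k)%:R =
    p`_k / (sk n k)%:R * (xQx (const_mx 1 : 'M[F]_n))`_k.
  rewrite coef_xQx mulr_sumr; apply: eq_bigr => i _; rewrite mulr_sumr.
  apply: eq_bigr => j _; rewrite !mxE mul1r.
  by case: (eqVneq (i + j)%N k) => [->|]; rewrite ?mulr0.
rewrite coef_xQx_const1; case: ifP => [lt_k|ge_k].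
  by rewrite mulfVK // pnatr_eq0 -lt0n sk_gt0.
by rewrite mulr0 nth_default // (leq_trans size_p) // leqNgt ge_k.
Qed.

Lemma QmatD (F : fieldType) n (p q : {poly F}) : Qmat n (p + q) = Qmat n p + Qmat n q.
Proof. by apply/matrixP => i j; rewrite !mxE coefD mulrDl. Qed.

Lemma QmatZ (F : fieldType) n a (p : {poly F}) : Qmat n (a *: p) = a *: Qmat n p.
Proof. by apply/matrixP => i j; rewrite !mxE coefZ mulrA. Qed.

Lemma Qmat0 (F : fieldType) n : Qmat n (0 : {poly F}) = 0.
Proof. by apply/matrixP => i j; rewrite !mxE coef0 mul0r. Qed.

Lemma trmx_Qmat (F : fieldType) n (p : {poly F}) : (Qmat n p)^T = Qmat n p.
Proof. by apply/matrixP => i j; rewrite !mxE addnC. Qed.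

Lemma xQxB (F : comNzRingType) n (A B : 'M[F]_n) : xQx (A - B) = xQx A - xQx B.
Proof.
rewrite /xQx -sumrB; apply: eq_bigr => i _; rewrite -sumrB.
by apply: eq_bigr => j _; rewrite !mxE scalerBl.
Qed.

Lemma xQxD (F : comNzRingType) n (A B : 'M[F]_n) : xQx (A + B) = xQx A + xQx B.
Proof.
rewrite /xQx -big_split; apply: eq_bigr => i _; rewrite -big_split.
by apply: eq_bigr => j _; rewrite !mxE scalerDl.
Qed.

Lemma map_xQx (F K : fieldType) (phi : {rmorphism F -> K}) n (A : 'M[F]_n) :
  map_poly phi (xQx A) = xQx (map_mx phi A).
Proof.
rewrite /xQx rmorph_sum; apply: eq_bigr => i _; rewrite rmorph_sum.
by apply: eq_bigr => j _; rewrite /= map_polyZ map_polyXn mxE.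
Qed.

Lemma map_Qmat (F K : fieldType) (phi : {rmorphism F -> K}) n (p : {poly F}) :
  map_mx phi (Qmat n p) = Qmat n (map_poly phi p).
Proof. by apply/matrixP => i j; rewrite !mxE coef_map fmorph_div rmorph_nat. Qed.

Lemma map_proj_pi (F K : fieldType) (phi : {rmorphism F -> K}) n (p : {poly F}) (Q : 'M[F]_n) :
  map_mx phi (proj_pi p Q) = proj_pi (map_poly phi p) (map_mx phi Q).
Proof. by rewrite /proj_pi map_mxB map_Qmat raddfB /= map_xQx. Qed.

Lemma trmx_proj_pi (F : fieldType) n (p : {poly F}) (Q : 'M[F]_n) :
  Q^T = Q -> (proj_pi p Q)^T = proj_pi p Q.
Proof. by move=> Q_sym; rewrite /proj_pi linearB /= Q_sym trmx_Qmat. Qed.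

Lemma xQx_proj_pi (F : numFieldType) n (p : {poly F}) (Q : 'M[F]_n) :
  (size p <= n.*2.-1)%N -> xQx (proj_pi p Q) = p.
Proof.
move=> size_p; rewrite /proj_pi xQxB xQx_Qmat; first by rewrite opprB addrC subrK.
by rewrite (leq_trans (size_polyD _ _)) // geq_max size_xQx size_polyN.
Qed.

Lemma proj_pi_addl (F : fieldType) n (p : {poly F}) (A D : 'M[F]_n) :
  proj_pi p (A + D) = A + (D - Qmat n (xQx D)) - Qmat n (xQx A - p).
Proof.
rewrite /proj_pi xQxD addrAC !QmatD.
by apply/matrixP => i j; rewrite !mxE; ring.
Qed.

Definition frobenius2 (F : pzRingType) n (M : 'M[F]_n) : F :=
  \sum_(i < n) \sum_(j < n) M i j ^+ 2.

Section QuadraticFormBounds.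
Variable R : realFieldType.

(* Lagrange's identity, summed: the defect is a sum of squares. *)
Lemma sqr_sum_mul_le (I : finType) (a b : I -> R) :
  (\sum_i a i * b i) ^+ 2 <= (\sum_i a i ^+ 2) * (\sum_i b i ^+ 2).
Proof.
rewrite expr2 !mulr_suml.
under eq_bigr => i _ do rewrite mulr_sumr.
under [X in _ <= X]eq_bigr => i _ do rewrite mulr_sumr.
set L := \sum_i _; set S := \sum_i _.
suff : L + L <= S + S by lra.
rewrite {2}/S exchange_big /= /L /S -!big_split /=.
apply: ler_sum => i _; rewrite -!big_split /=; apply: ler_sum => j _.
by have := sqr_ge0 (a i * b j - a j * b i); nra.
Qed.

Lemma qformE n (v : 'cV[R]_n) (M : 'M[R]_n) :
  (v^T *m M *m v) 0 0 = \sum_(p : 'I_n * 'I_n) M p.1 p.2 * (v p.1 0 * v p.2 0).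
Proof.
rewrite -(pair_bigA _ (fun i j => M i j * (v i 0 * v j 0))) mxE exchange_big /=.
apply: eq_bigr => j _.
by rewrite mxE mulr_suml; apply: eq_bigr => i _; rewrite !mxE; ring.
Qed.

Lemma qformD n (v : 'cV[R]_n) (A B : 'M[R]_n) :
  (v^T *m (A + B) *m v) 0 0 = (v^T *m A *m v) 0 0 + (v^T *m B *m v) 0 0.
Proof. by rewrite mulmxDr mulmxDl mxE. Qed.

Lemma qformB n (v : 'cV[R]_n) (A B : 'M[R]_n) :
  (v^T *m (A - B) *m v) 0 0 = (v^T *m A *m v) 0 0 - (v^T *m B *m v) 0 0.
Proof. by rewrite mulmxBr mulmxBl !mxE. Qed.

Lemma vnorm2E n (v : 'cV[R]_n) : (v^T *m v) 0 0 = \sum_(i < n) v i 0 ^+ 2.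
Proof. by rewrite mxE; apply: eq_bigr => i _; rewrite mxE expr2. Qed.

Lemma vnorm2_ge0 n (v : 'cV[R]_n) : 0 <= (v^T *m v) 0 0.
Proof. by rewrite vnorm2E sumr_ge0 // => i _; apply: sqr_ge0. Qed.

Lemma vnorm2_gt0 n (v : 'cV[R]_n) : v != 0 -> 0 < (v^T *m v) 0 0.
Proof.
move=> v_neq0; rewrite lt_def vnorm2_ge0 andbT vnorm2E; apply: contra v_neq0 => /eqP v0.
apply/eqP/matrixP => i j; rewrite ord1 mxE.
have /eqP := @psumr_eq0P _ _ _ _ (fun i _ => sqr_ge0 (v i 0)) v0 i isT.
by rewrite sqrf_eq0 => /eqP.
Qed.

Lemma sqr_qform_le n (v : 'cV[R]_n) (M : 'M[R]_n) :
  (v^T *m M *m v) 0 0 ^+ 2 <= frobenius2 M * (v^T *m v) 0 0 ^+ 2.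
Proof.
have -> : (v^T *m v) 0 0 ^+ 2 = \sum_(p : 'I_n * 'I_n) (v p.1 0 * v p.2 0) ^+ 2.
  rewrite vnorm2E expr2 mulr_suml -(pair_bigA _ (fun i j => (v i 0 * v j 0) ^+ 2)) /=.
  apply: eq_bigr => i _.
  by rewrite mulr_sumr; apply: eq_bigr => j _; ring.
by rewrite qformE /frobenius2 pair_bigA; apply: sqr_sum_mul_le.
Qed.

Lemma normr_qform_le n (v : 'cV[R]_n) (M : 'M[R]_n) (B : R) :
  0 <= B -> frobenius2 M <= B ^+ 2 -> `|(v^T *m M *m v) 0 0| <= B * (v^T *m v) 0 0.
Proof.
move=> B_ge0 M_le; rewrite -(@ler_pXn2r _ 2) ?nnegrE ?mulr_ge0 ?vnorm2_ge0 //.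
rewrite real_normK ?num_real // exprMn (le_trans (sqr_qform_le v M)) //.
by rewrite ler_wpM2r // exprn_ge0 // vnorm2_ge0.
Qed.

(* With [c_k] the mean of [D] on the [k]-th antidiagonal, the cross term
   [<D, Q_(x^T D x)>] and the square [||Q_(x^T D x)||^2] both equal
   [S = \sum_k s_k c_k^2]. *)
Lemma frobenius2_sub_Qmat_xQx_le n (D : 'M[R]_n) :
  frobenius2 (D - Qmat n (xQx D)) <= frobenius2 D.
Proof.
pose c k := (xQx D)`_k / (sk n k)%:R.
pose S := \sum_(k < n.*2.-1) c k ^+ 2 * (sk n k)%:R.
have cross : \sum_(i < n) \sum_(j < n) D i j * c (i + j)%N = S.
  rewrite (sum_antidiagonal D c); apply: eq_bigr => k _.
  have sk_neq0 : ((sk n k)%:R : R) != 0 by rewrite pnatr_eq0 -lt0n sk_gt0.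
  by rewrite /c; field.
have square : \sum_(i < n) \sum_(j < n) (const_mx 1 : 'M[R]_n) i j * c (i + j)%N ^+ 2 = S.
  rewrite (sum_antidiagonal _ (fun k => c k ^+ 2)); apply: eq_bigr => k _.
  by rewrite coef_xQx_const1 ltn_ord.
have S_ge0 : 0 <= S by apply: sumr_ge0 => k _; rewrite mulr_ge0 ?sqr_ge0 ?ler0n.
suff -> : frobenius2 (D - Qmat n (xQx D)) = frobenius2 D - 2 * S + S by lra.
rewrite -{1}cross -square /frobenius2 mulr_sumr -sumrB -big_split /=.
apply: eq_bigr => i _; rewrite mulr_sumr -sumrB -big_split /=.
by apply: eq_bigr => j _; rewrite !mxE /c; ring.
Qed.
End QuadraticFormBounds.

Section CoefficientSums.
Variable R : realFieldType.
Implicit Types (p : {poly R}) (f : nat -> R).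

Lemma ler_sum_ord_widen N M f : (N <= M)%N -> (forall k, 0 <= f k) ->
  \sum_(k < N) f k <= \sum_(k < M) f k.
Proof.
move=> le_NM f_ge0; rewrite (big_ord_widen _ _ le_NM).
by rewrite [X in _ <= X](bigID (fun k : 'I_M => (k < N)%N)) /= lerDl sumr_ge0.
Qed.

Lemma sum_ord_widen_eq0 N M f : (N <= M)%N -> (forall k, (N <= k)%N -> f k = 0) ->
  \sum_(k < M) f k = \sum_(k < N) f k.
Proof.
move=> le_NM f0; rewrite (big_ord_widen _ _ le_NM) (bigID (fun k : 'I_M => (k < N)%N)) /=.
by rewrite [X in _ + X]big1 ?addr0 // => k; rewrite -leqNgt => /f0.
Qed.

Lemma sum_sqr_coef_le N p : \sum_(k < N) p`_k ^+ 2 <= \sum_(k < size p) p`_k ^+ 2.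
Proof.
apply: (le_trans (ler_sum_ord_widen (leq_maxl N (size p)) (fun k => sqr_ge0 _))).
rewrite (@sum_ord_widen_eq0 (size p) _ (fun k => p`_k ^+ 2)) ?leq_maxr // => k ge_k.
by rewrite nth_default // expr0n.
Qed.

Lemma sum_sqr_coef_XnM_le N i p :
  \sum_(k < N) ('X^i * p)`_k ^+ 2 <= \sum_(k < size p) p`_k ^+ 2.
Proof.
pose M := maxn N (size p).
have le_N : (N <= i + M)%N by rewrite /M; lia.
apply: (le_trans (ler_sum_ord_widen le_N (fun k => sqr_ge0 _))).
rewrite big_split_ord /= big1 ?add0r => [|k _]; last by rewrite coefXnM ltn_ord expr0n.
under eq_bigr => k _ do rewrite coefXnM ltnNge leq_addr /= addKn.
rewrite (@sum_ord_widen_eq0 (size p) M (fun k => p`_k ^+ 2)) ?leq_maxr // => k ge_k.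
by rewrite nth_default // expr0n.
Qed.

(* Each coefficient [p_k] is spread over the [s_k] entries of an antidiagonal,
   contributing [p_k^2 / s_k <= p_k^2]. *)
Lemma frobenius2_Qmat_le n p :
  frobenius2 (Qmat n p) <= \sum_(k < n.*2.-1) p`_k ^+ 2.
Proof.
have -> : frobenius2 (Qmat n p) = \sum_(i < n) \sum_(j < n)
    (const_mx 1 : 'M[R]_n) i j * (p`_(i + j) / (sk n (i + j))%:R) ^+ 2.
  by apply: eq_bigr => i _; apply: eq_bigr => j _; rewrite !mxE mul1r.
rewrite (sum_antidiagonal _ (fun k => (p`_k / (sk n k)%:R) ^+ 2)).
apply: ler_sum => k _; rewrite coef_xQx_const1 ltn_ord.
have sk_ge1 : 1 <= (sk n k)%:R :> R by rewrite ler1n sk_gt0.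
have -> : (p`_k / (sk n k)%:R) ^+ 2 * (sk n k)%:R = p`_k ^+ 2 / (sk n k)%:R.
  by field; rewrite pnatr_eq0 -lt0n sk_gt0.
by rewrite ler_pdivrMr ?(lt_le_trans ltr01) // ler_peMr // sqr_ge0.
Qed.
End CoefficientSums.

Section Perturbation.
Variable R : rcfType.
Implicit Types (p h : {poly R}).

Lemma sqr_polynorm p : polynorm p ^+ 2 = \sum_(k < size p) p`_k ^+ 2.
Proof. by rewrite /polynorm sqr_sqrtr // sumr_ge0 // => k _; apply: sqr_ge0. Qed.

Lemma polynorm_ge0 p : 0 <= polynorm p.
Proof. exact: sqrtr_ge0. Qed.

Lemma normr_qform_Qmat_le n (v : 'cV[R]_n) p :
  `|(v^T *m Qmat n p *m v) 0 0| <= polynorm p * (v^T *m v) 0 0.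
Proof.
apply: normr_qform_le; first exact: polynorm_ge0.
by rewrite sqr_polynorm (le_trans (frobenius2_Qmat_le _ _)) ?sum_sqr_coef_le.
Qed.

Lemma normr_qform_Qmat_XnM_le n (v : 'cV[R]_n) i p :
  `|(v^T *m Qmat n ('X^i * p) *m v) 0 0| <= polynorm p * (v^T *m v) 0 0.
Proof.
apply: normr_qform_le; first exact: polynorm_ge0.
by rewrite sqr_polynorm (le_trans (frobenius2_Qmat_le _ _)) ?sum_sqr_coef_XnM_le.
Qed.

Lemma normr_qform_Qmat_mul_le n (v : 'cV[R]_n) m h p (d : R) :
  (size h <= m)%N -> (forall i, (i < m)%N -> `|h`_i| <= d) ->
  `|(v^T *m Qmat n (h * p) *m v) 0 0| <= m%:R * d * polynorm p * (v^T *m v) 0 0.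
Proof.
move=> size_h h_le.
have -> : h * p = \sum_(i < m) h`_i *: ('X^i * p).
  have {1}-> : h = \sum_(i < m) h`_i *: 'X^i.
    rewrite -poly_def; apply/polyP => k; rewrite coef_poly.
    by case: ltnP => // le_mk; rewrite nth_default // (leq_trans size_h).
  by rewrite mulr_suml; apply: eq_bigr => i _; rewrite scalerAl.
rewrite (big_morph (Qmat n) (@QmatD _ n) (Qmat0 _ n)) mulmx_sumr mulmx_suml summxE.
apply: (le_trans (ler_norm_sum _ _ _)).
have -> : m%:R * d * polynorm p * (v^T *m v) 0 0 =
    \sum_(i < m) d * (polynorm p * (v^T *m v) 0 0).
  by rewrite sumr_const card_ord -[RHS]mulr_natl !mulrA.
apply: ler_sum => i _; rewrite QmatZ -scalemxAr -scalemxAl mxE normrM.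
by apply: ler_pM => //; [exact: h_le | exact: normr_qform_Qmat_XnM_le].
Qed.

Lemma normr_qform_residual_le n (v : 'cV[R]_n) (D : 'M[R]_n) (d : R) :
  0 <= d -> (forall i j, `|D i j| <= d) ->
  `|(v^T *m (D - Qmat n (xQx D)) *m v) 0 0| <= n%:R * d * (v^T *m v) 0 0.
Proof.
move=> d_ge0 D_le; apply: normr_qform_le; first by rewrite mulr_ge0.
apply: le_trans (frobenius2_sub_Qmat_xQx_le D) _.
apply: (@le_trans _ _ (\sum_(i < n) \sum_(j < n) d ^+ 2)).
  apply: ler_sum => i _; apply: ler_sum => j _.
  by rewrite -real_normK ?num_real // ler_pXn2r ?nnegrE.
by rewrite !sumr_const !card_ord -mulrnA mulnn exprMn -natrX mulr_natl.
Qed.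

Lemma symmetric_add_posdef n (A E : 'M[R]_n) (s e : R) :
  A^T = A -> (forall a, eigenvalue A a -> s <= a) -> e < s ->
  (forall v : 'cV[R]_n, `|(v^T *m E *m v) 0 0| <= e * (v^T *m v) 0 0) ->
  posdef (A + E).
Proof.
move=> A_sym A_eig lt_es E_le v v_neq0.
have A_ge := symmetric_qform_ge A_sym A_eig v.
have := E_le v; rewrite ler_norml => /andP[E_ge _].
have : 0 < (s - e) * (v^T *m v) 0 0 by rewrite mulr_gt0 ?subr_gt0 ?vnorm2_gt0.
by rewrite qformD mulrBl; lra.
Qed.

Lemma proj_pi_posdef n (A B : 'M[R]_n) r h p (s d : R) :
  A^T = A -> (forall a, eigenvalue A a -> s <= a) -> 0 <= d ->
  (forall i j, `|B i j - A i j| <= d) ->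
  (size h <= n.-1)%N -> (forall i, (i < n.-1)%N -> `|h`_i| <= d) ->
  n%:R * d + polynorm r + n.-1%:R * d * polynorm p < s ->
  posdef (proj_pi (xQx A - r - h * p) B).
Proof.
move=> A_sym A_eig d_ge0 B_near size_h h_near margin.
set D := B - A; have D_near i j : `|D i j| <= d by rewrite !mxE.
have -> : B = A + D by rewrite addrC subrK.
rewrite proj_pi_addl (_ : xQx A - _ = r + h * p); last by ring.
rewrite QmatD -addrA; apply: symmetric_add_posdef A_sym A_eig margin _ => v.
rewrite qformB (qformD _ (Qmat n r)); apply: le_trans (ler_normB _ _) _.
apply: le_trans (lerD (lexx _) (ler_normD _ _)) _.
rewrite -(addrA (n%:R * d)) [X in _ <= X]mulrDl [X in _ <= _ + X]mulrDl.
apply: lerD; last apply: lerD.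
- exact: normr_qform_residual_le.
- exact: normr_qform_Qmat_le.
- exact: normr_qform_Qmat_mul_le.
Qed.

Lemma perturbation_margin n (sigma rho delta N : R) : 0 < delta -> 0 <= N ->
  delta < (sigma - rho) / (n%:R + n.-1%:R * Num.sqrt n%:R * N) ->
  n%:R * delta + rho + n.-1%:R * delta * N < sigma.
Proof.
move=> delta_gt0 N_ge0; case: n => [|n].
  (* for [n = 0] the bound is [_ / 0 = 0], contradicting [0 < delta] *)
  by rewrite !mul0r add0r invr0 mulr0 => /(lt_trans delta_gt0); rewrite ltxx.
have sqrt_ge1 : 1 <= Num.sqrt (n.+1%:R : R).
  by rewrite -{1}sqrtr1 ler_wsqrtr // ler1n.
have den_gt0 : 0 < n.+1%:R + n.+1.-1%:R * Num.sqrt n.+1%:R * N :> R.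
  by rewrite ltr_wpDr ?ltr0n // !mulr_ge0 ?ler0n ?sqrtr_ge0.
rewrite ltr_pdivlMr //= => lt_delta.
have : 0 <= n%:R * N * delta * (Num.sqrt n.+1%:R - 1).
  by rewrite !mulr_ge0 ?ler0n ?subr_ge0 // ltW.
by lra.
Qed.
End Perturbation.

Theorem mainTheorem10 (R : realType) (n : nat) (f g : {poly rat})
  (Qs : 'M[R]_n) (sigma : R) (qs : {poly R}) (delta : R) :
  size f = n.+1 ->
  (size g <= (n.*2).-1)%N ->
  Qs^T = Qs ->
  posdef Qs ->
  smallest_eigenvalue Qs sigma ->
  0 < sigma ->
  (size qs <= n.-1)%N ->
  polynorm (xQx Qs + qs * map_poly ratr f - map_poly ratr g) < sigma ->
  0 < delta ->
  delta < (sigma - polynorm (xQx Qs + qs * map_poly ratr f - map_poly ratr g))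
          / (n%:R + (n.-1)%:R * Num.sqrt (n%:R) * polynorm (map_poly (@ratr R) f)) ->
  forall (Qb : 'M[rat]_n) (q : {poly rat}),
    Qb^T = Qb ->
    (size q <= n.-1)%N ->
    (forall i j : 'I_n, `|ratr (Qb i j) - Qs i j| <= delta) ->
    (forall i : nat, (i < n.-1)%N -> `|ratr q`_i - qs`_i| <= delta) ->
    let Q := proj_pi (g - q * f) Qb in
    Q^T = Q /\ g = xQx Q + q * f /\ posdef (map_mx (@ratr R) Q).
Proof.
move=> size_f size_g Qs_sym _ [_ Qs_eig] _ size_qs _ delta_gt0 delta_lt
  Qb q Qb_sym size_q Qb_near q_near Q.
have size_p : (size (g - q * f)%R <= n.*2.-1)%N.
  rewrite (leq_trans (size_polyD _ _)) // geq_max size_g size_polyN.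
  apply: leq_trans (size_polyMleq _ _) _; rewrite size_f; move: (size q) size_q; lia.
split; first exact: trmx_proj_pi.
split; first by rewrite xQx_proj_pi ?subrK.
set F := map_poly (@ratr R) f; set r := xQx Qs + qs * F - map_poly ratr g.
rewrite map_proj_pi (_ : map_poly _ _ = xQx Qs - r - (map_poly ratr q - qs) * F); last first.
  by rewrite /r /F rmorphB rmorphM /=; ring.
apply: proj_pi_posdef Qs_sym Qs_eig (ltW delta_gt0) _ _ _ _ => [i j|||].
- by rewrite mxE; apply: Qb_near.
- by rewrite (leq_trans (size_polyD _ _)) // geq_max size_polyN size_map_poly size_q.
- by move=> i lt_i; rewrite coefB coef_map; apply: q_near.
- exact: perturbation_margin delta_gt0 (polynorm_ge0 F) delta_lt.
Qed.
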